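(* Let $H=(S,A,\delta,\mathcal{O})$ be a POMDP with initial state $\ell_0$, $\mathcal{G}$ the game with probabilistic uncertainty constructed from it, and $\alpha_G$ a Player-1 strategy in $\mathcal{G}$. Define the Player-1 strategy $\alpha_H$ in $H$ by $\alpha_H(\rho_H)(a)=\sum_{\rho'\in\mathsf{ActMt}(h(\rho_H))}\mathsf{ObsSeq}(h(\rho_H))(\rho')\cdot\alpha_G(\rho')(a)$ for $a\in A$. Then for all finite prefixes $\rho_G$ of $\mathcal{G}$, $\Pr^{\alpha_H}_{\ell_0}(\mathsf{Cone}(h^{-1}(\rho_G)))=\Pr^{\alpha_G}_{\ell_0}(\mathsf{Cone}(\rho_G))$, where the left side is the measure in $H$ and the right side the measure in $\mathcal{G}$.
   Context: A POMDP is $H=(S,A,\delta,\mathcal{O})$ with $S$ a finite state set, $A$ a finite action set, $\delta:S\times A\to\mathcal{D}(S)$ ($\mathcal{D}$ = probability distributions), and $\mathcal{O}$ a partition of $S$; $\mathsf{obs}(s)$ is the block containing $s$. A Player-1 strategy in $H$ maps prefixes $s_0a_0\ldots s_n$ to $\mathcal{D}(A)$. The measure in $H$ from $\ell_0$: $\Pr(\mathsf{Cone}(\ell_0))=1$ and $\Pr(\mathsf{Cone}(\rho as'))=\Pr(\mathsf{Cone}(\rho))\alpha(\rho)(a)\delta(s,a)(s')$ where $s$ is the last state of $\rho$ ($\mathsf{Cone}(\rho)$ = plays with prefix $\rho$). The game $\mathcal{G}=(L,\Sigma_I,\Sigma_O,\Delta,\mathsf{un})$ constructed from $H$ has $L=S$,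 $\Sigma_I=A$, $\Sigma_O=\{\bot\}$, $\Delta(\ell,a,\bot)=\delta(\ell,a)$, and $\mathsf{un}(\ell)(\ell')=1/|\mathsf{obs}(\ell)|$ if $\mathsf{obs}(\ell')=\mathsf{obs}(\ell)$, else $0$; a Player-1 strategy in $\mathcal{G}$ maps finite sequences $\ell_0a_0\bot\ell_1\ldots\ell_n$ to $\mathcal{D}(A)$. The map $h$ sends $s_0a_0s_1a_1\ldots s_n$ to $s_0a_0\bot s_1a_1\bot\ldots s_n$ (a bijection). For sequences $\rho=\ell_0\sigma^i_0\sigma^o_0\ldots\ell_n$, $\rho'=\ell'_0\tilde\sigma^i_0\tilde\sigma^o_0\ldots\ell'_m$ of $\mathcal{G}$, $\mathsf{ObsSeq}(\rho)(\rho')=\prod_{j=0}^n\mathsf{un}(\ell_j)(\ell'_j)$ if $m=n$ and all letters coincide, else $0$; $\mathsf{ActMt}(\rho)$ is the set of sequences with the same length and letters as $\rho$. Since Player 2 has only one strategy (always $\bot$), the measure in $\mathcal{G}$ from $\ell_0$ is: $\Pr^{\alpha}_{\ell_0}(\mathsf{Cone}(\ell_0))=1$ and, for $\rho$ with last location $\ell_n$, $\Pr(\mathsf{Cone}(\rho a\bot\ell_{n+1}))=\Pr(\mathsf{Cone}(\rho))\sum_{\rho'\in\mathsf{ActMt}(\rho)}\mathsf{ObsSeq}(\rho)(\rho')\alpha(\rho')(a)\Delta(\ell_n,a,\bot)(\ell_{n+1})$. *)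

From HB Require Import structures.
From mathcomp Require Import all_boot all_order all_algebra.
Set Implicit Arguments. Unset Strict Implicit. Unset Printing Implicit Defensive.
Import Order.TTheory GRing.Theory Num.Theory.
Local Open Scope ring_scope.

Section POMDP.
Variables (R : realFieldType) (S A : finType) (O : eqType).

Definition is_distr (T : finType) (f : T -> R) :=
  (forall x, 0 <= f x) /\ \sum_x f x = 1.

(* Finite prefixes s0 a0 s1 ... an-1 sn of the POMDP H *)
Definition Hpre := (S * seq (A * S))%type.
(* Finite prefixes l0 a0 bot l1 ... of the game G (Sigma_I = A, Sigma_O = unit, bot = tt) *)
Definition Gpre := (S * seq (A * unit * S))%type.

Definition lastH (rho : Hpre) : S := last rho.1 (map snd rho.2).
Definition lastG (rho : Gpre) : S := last rho.1 (map snd rho.2).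

Definition h (rho : Hpre) : Gpre := (rho.1, map (fun p => (p.1, tt, p.2)) rho.2).
Definition hinv (rho : Gpre) : Hpre := (rho.1, map (fun p => (p.1.1, p.2)) rho.2).

Lemma hK : cancel h hinv.
Proof. by case=> s l; rewrite /h /hinv /= -map_comp; congr (_, _); elim: l => //= [[a x] l] ->. Qed.
Lemma hinvK : cancel hinv h.
Proof. by case=> s l; rewrite /h /hinv /= -map_comp; congr (_, _); elim: l => //= [[[a []] x] l] ->. Qed.

Definition Delta_of (delta : S -> A -> S -> R) : S -> A -> unit -> S -> R :=
  fun l a _ => delta l a.
Definition un_of (obs : S -> O) (l l' : S) : R :=
  if obs l' == obs l then (#|[pred s | obs s == obs l]|%:R)^-1 else 0.

Definition ObsSeq (un : S -> S -> R) (rho rho' : Gpre) : R :=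
  if (size rho.2 == size rho'.2) && (map fst rho.2 == map fst rho'.2)
  then un rho.1 rho'.1 * \prod_(p <- zip rho.2 rho'.2) un p.1.2 p.2.2
  else 0.

(* ActMt(rho): all sequences with the same length and letters as rho
   (a duplicate-free list) *)
Fixpoint actmt_tail (l : seq (A * unit * S)) : seq (seq (A * unit * S)) :=
  match l with
  | [::] => [:: [::]]
  | x :: l' => [seq (x.1, s) :: t | s <- enum S, t <- actmt_tail l']
  end.
Definition ActMt (rho : Gpre) : seq Gpre :=
  [seq (s, t) | s <- enum S, t <- actmt_tail rho.2].

(* Measure of cones in H, from l0, under strategy alpha.
   prH_rev s0 rl gives Pr(Cone(s0, rev rl)). *)
Fixpoint prH_rev (delta : S -> A -> S -> R) (alpha : Hpre -> A -> R)
    (l0 s0 : S) (rl : seq (A * S)) : R :=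
  match rl with
  | [::] => if s0 == l0 then 1 else 0
  | x :: rl' => prH_rev delta alpha l0 s0 rl' *
                alpha (s0, rev rl') x.1 * delta (lastH (s0, rev rl')) x.1 x.2
  end.
Definition PrH delta alpha l0 (rho : Hpre) : R :=
  prH_rev delta alpha l0 rho.1 (rev rho.2).

Fixpoint prG_rev (Delta : S -> A -> unit -> S -> R) (un : S -> S -> R)
    (alpha : Gpre -> A -> R) (l0 s0 : S) (rl : seq (A * unit * S)) : R :=
  match rl with
  | [::] => if s0 == l0 then 1 else 0
  | x :: rl' =>
      let rho := (s0, rev rl') in
      prG_rev Delta un alpha l0 s0 rl' *
      (\sum_(rho' <- ActMt rho) ObsSeq un rho rho' * alpha rho' x.1.1) *
      Delta (lastG rho) x.1.1 x.1.2 x.2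
  end.
Definition PrG Delta un alpha l0 (rho : Gpre) : R :=
  prG_rev Delta un alpha l0 rho.1 (rev rho.2).

Definition alphaH (un : S -> S -> R) (alphaG : Gpre -> A -> R) (rho : Hpre) (a : A) : R :=
  \sum_(rho' <- ActMt (h rho)) ObsSeq un (h rho) rho' * alphaG rho' a.

End POMDP.

From mathcomp Require Import all_boot all_order all_algebra.
Import Order.TTheory GRing.Theory Num.Theory.
Local Open Scope ring_scope.

(* Both cone measures are products along the prefix, unfolded by the same
   recursion. The transition factors agree since [h] preserves the last state,
   and the strategy factors agree since [alphaH] at [hinv rho] is by
   construction the observation-weighted average of [alphaG] used by the game
   at [h (hinv rho) = rho]. No distribution hypothesis is needed. *)

Section Transfer.
Variables (R : realFieldType) (S A : finType).

Lemma lastH_hinv (rho : Gpre S A) : lastH (hinv rho) = lastG rho.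
Proof. by rewrite /lastH /lastG /= -map_comp. Qed.

Lemma alphaH_hinv (un : S -> S -> R) (alphaG : Gpre S A -> A -> R)
    (rho : Gpre S A) (a : A) :
  alphaH un alphaG (hinv rho) a =
  \sum_(rho' <- ActMt rho) ObsSeq un rho rho' * alphaG rho' a.
Proof. by rewrite /alphaH hinvK. Qed.

Lemma prH_rev_hinv (delta : S -> A -> S -> R) (un : S -> S -> R)
    (alphaG : Gpre S A -> A -> R) (l0 s0 : S) (rl : seq (A * unit * S)) :
  prH_rev delta (alphaH un alphaG) l0 s0 [seq (p.1.1, p.2) | p <- rl] =
  prG_rev (Delta_of delta) un alphaG l0 s0 rl.
Proof.
elim: rl => [|x rl IH] //=; rewrite IH -map_rev.
have -> : (s0, [seq (p.1.1, p.2) | p <- rev rl]) = hinv (s0, rev rl) by [].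
by rewrite alphaH_hinv lastH_hinv.
Qed.

End Transfer.

Theorem lemma6 (R : realFieldType) (S A : finType) (O : eqType)
  (delta : S -> A -> S -> R) (obs : S -> O) (l0 : S)
  (alphaG : Gpre S A -> A -> R) :
  (forall s a, is_distr (delta s a)) ->
  (forall rho, is_distr (alphaG rho)) ->
  forall rhoG : Gpre S A,
    PrH delta (alphaH (un_of R obs) alphaG) l0 (hinv rhoG) =
    PrG (Delta_of delta) (un_of R obs) alphaG l0 rhoG.
Proof.
move=> _ _ [s0 l].
by rewrite /PrH /PrG /= -map_rev prH_rev_hinv.
Qed.
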